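(* Let $k\ge2$ and $\mathcal{R}=\mathbb{C}[\xi_0,\xi_1,\xi_2,\xi_3]$. The sequence $\mathcal{R}^{k+1}\xleftarrow{D_0^{(k)}(\xi)^t}\mathcal{R}^{2k}\xleftarrow{D_1^{(k)}(\xi)^t}\mathcal{R}^{k-1}$ is exact, i.e. $\ker D_0^{(k)}(\xi)^t=\operatorname{Im}D_1^{(k)}(\xi)^t$ in $\mathcal{R}^{2k}$.
   Context: Put $a=\frac1i(\xi_0-i\xi_1)$, $c=\frac1i(\xi_0+i\xi_1)$, $b=\frac1i(\xi_2-i\xi_3)$, $d=\frac1i(\xi_2+i\xi_3)$ (polynomials in $\mathcal{R}$). $D_0^{(k)}(\xi)$ is the $(2k)\times(k+1)$ polynomial matrix whose row $2j$ ($j=0,\dots,k-1$, indices from $0$) has $-d$ in column $j$ and $-c$ in column $j+1$, and whose row $2j+1$ has $a$ in column $j$ and $-b$ in column $j+1$, all other entries $0$. $D_1^{(k)}(\xi)$ is the $(k-1)\times(2k)$ matrix whose row $j$ ($j=0,\dots,k-2$) has $-a,-d,b,-c$ in columns $2j,2j+1,2j+2,2j+3$ and zeros elsewhere. $t$ denotes transpose; the matrices act on column vectors of polynomials. *)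

From mathcomp Require Import all_boot all_algebra.
From mathcomp Require Import complex.
From mathcomp Require Import Rstruct.
From mathcomp Require Import mpoly.
Set Implicit Arguments.
Unset Strict Implicit.
Unset Printing Implicit Defensive.
Import GRing.Theory.
Local Open Scope ring_scope.

Definition CC : numClosedFieldType := complex Rdefinitions.R.

Definition Rpoly := {mpoly CC[4]}.

Definition xi (n : 'I_4) : Rpoly := 'X_n.

Definition pa : Rpoly := ('i : CC)^-1 *: (xi 0 - ('i : CC) *: xi 1).
Definition pc : Rpoly := ('i : CC)^-1 *: (xi 0 + ('i : CC) *: xi 1).
Definition pb : Rpoly := ('i : CC)^-1 *: (xi 2 - ('i : CC) *: xi 3).
Definition pd : Rpoly := ('i : CC)^-1 *: (xi 2 + ('i : CC) *: xi 3).

Definition D0 (k : nat) : 'M[Rpoly]_(2 * k, k.+1) :=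
  \matrix_(r < 2 * k, col < k.+1)
    let j := (r %/ 2)%N in
    if ~~ odd r then
      (if col == j :> nat then - pd
       else if col == j.+1 :> nat then - pc else 0)
    else
      (if col == j :> nat then pa
       else if col == j.+1 :> nat then - pb else 0).

Definition D1 (k : nat) : 'M[Rpoly]_(k.-1, 2 * k) :=
  \matrix_(j < k.-1, col < 2 * k)
    if col == (2 * j)%N :> nat then - pa
    else if col == (2 * j).+1 :> nat then - pd
    else if col == (2 * j).+2 :> nat then pb
    else if col == (2 * j).+3 :> nat then - pc
    else 0.

From mathcomp Require Import all_boot all_algebra.
From mathcomp Require Import complex Rstruct mpoly.
From mathcomp Require Import ring zify.
Set Implicit Arguments.
Unset Strict Implicit.
Unset Printing Implicit Defensive.
Import GRing.Theory Num.Theory.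
Local Open Scope ring_scope.

(* Read the even and odd entries of a column of R^(2k) as the coefficients
   of polynomials P and Q in an auxiliary variable X.  Then D0^t v is the
   coefficient vector of (a - bX) Q - (d + cX) P, and D1^t w interleaves
   -(a - bX) W and -(d + cX) W, where W has the entries of w as coefficients.
   Exactness becomes: (d + cX) P = (a - bX) Q with deg P, Q < k forces
   P = (a - bX) W and Q = (d + cX) W with deg W < k - 1.  Comparing constant
   terms gives d P(0) = a Q(0), hence P(0) = a u and Q(0) = d u since a and d
   are coprime (the substitution xi_1 |-> -i xi_0 kills a and fixes d);
   subtracting (a - bX) u and (d + cX) u and dividing by X lowers the degree,
   and the induction ends because ca + bd = -(xi_0^2 + xi_1^2 + xi_2^2 + xi_3^2)
   is not a zero divisor. *)

Definition pencil (R : nzRingType) (x y : R) : {poly R} := x%:P + y%:P * 'X.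

Lemma coef_pencilM (R : nzRingType) (x y : R) p m :
  (pencil x y * p)`_m = x * p`_m + y * (if m is m'.+1 then p`_m' else 0).
Proof. by rewrite mulrDl coefD coefCM -mulrA coefCM coefXM; case: m. Qed.

Lemma size_pencilM_leq (R : nzRingType) (x y : R) (p : {poly R}) n :
  (size p <= n)%N -> (size (pencil x y * p)%R <= n.+1)%N.
Proof.
have s2 : (size (pencil x y) <= 2)%N.
  rewrite (leq_trans (size_polyD _ _)) // geq_max (leq_trans (size_polyC_leq1 _)) //.
  rewrite (leq_trans (size_polyMleq _ _)) // size_polyX; have := size_polyC_leq1 y; lia.
move=> sp; rewrite (leq_trans (size_polyMleq _ _)) //; lia.
Qed.

Lemma drop_poly1_MX (R : nzRingType) (p : {poly R}) :
  p`_0 = 0 -> drop_poly 1 p * 'X = p.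
Proof. by move=> p0; apply/polyP => -[|i]; rewrite coefMX coef_drop_poly ?addn1. Qed.

Section PencilSyzygy.
Variables (R : comNzRingType) (a b c d : R).
Hypothesis coprime_da : forall p q, d * p = a * q -> exists u, p = a * u /\ q = d * u.
Hypothesis lreg_cabd : GRing.lreg (c * a + b * d).

Local Notation s := (pencil a (- b)).
Local Notation t := (pencil d c).

Lemma coprime_da_coef0 (P Q : {poly R}) :
  t * P = s * Q -> exists u, P`_0 = a * u /\ Q`_0 = d * u.
Proof.
move=> e; apply: coprime_da; have := congr1 (fun p : {poly R} => p`_0) e.
by rewrite !coef_pencilM !mulr0 !addr0.
Qed.

Lemma pencil_syzygyC (x y : R) : t * x%:P = s * y%:P -> x = 0 /\ y = 0.
Proof.
move=> e; have [u] := coprime_da_coef0 e; rewrite !coefC /= => -[xu yu].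
have := congr1 (fun p : {poly R} => p`_1) e.
rewrite !coef_pencilM !coefC /= xu yu !mulr0 !add0r => e1.
have -> : u = 0.
  by apply: lreg_cabd; rewrite mulr0 mulrDl -!mulrA e1 mulNr addNr.
by rewrite !mulr0.
Qed.

Lemma pencil_syzygy K (P Q : {poly R}) :
  (size P <= K.+1)%N -> (size Q <= K.+1)%N -> t * P = s * Q ->
  exists2 W : {poly R}, (size W <= K)%N & P = s * W /\ Q = t * W.
Proof.
elim: K P Q => [|K IH] P Q sP sQ e.
  rewrite (size1_polyC sP) (size1_polyC sQ) in e *.
  have [-> ->] := pencil_syzygyC e.
  by exists 0; rewrite ?size_poly0 // !mulr0.
have [u [Pu Qu]] := coprime_da_coef0 e.
pose P1 := P - s * u%:P; pose Q1 := Q - t * u%:P.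
have P1_0 : P1`_0 = 0 by rewrite coefB coef_pencilM coefC mulr0 addr0 Pu subrr.
have Q1_0 : Q1`_0 = 0 by rewrite coefB coef_pencilM coefC mulr0 addr0 Qu subrr.
have size_drop (p : {poly R}) x y : (size p <= K.+2)%N ->
    (size (drop_poly 1 (p - pencil x y * u%:P)%R) <= K.+1)%N.
  move=> sp; rewrite size_drop_poly leq_subLR add1n.
  rewrite (leq_trans (size_polyD _ _)) // size_polyN geq_max sp.
  exact: leq_trans (size_pencilM_leq x y (size_polyC_leq1 u)) _.
have e1 : t * drop_poly 1 P1 = s * drop_poly 1 Q1.
  have Xreg := monic_rreg (monicX R).
  apply: Xreg; rewrite -!mulrA !drop_poly1_MX //.
  by rewrite /P1 /Q1 !mulrBr e; congr (_ - _); exact: mulrCA.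
have [W sW [PW QW]] := IH _ _ (size_drop _ _ _ sP) (size_drop _ _ _ sQ) e1.
exists (u%:P + W * 'X).
  rewrite (leq_trans (size_polyD _ _)) // geq_max (leq_trans (size_polyC_leq1 _)) //.
  by rewrite (leq_trans (size_polyMleq _ _)) // size_polyX addn2.
rewrite !mulrDr (mulrA s W) (mulrA t W) -PW -QW !drop_poly1_MX //.
by rewrite !(addrC (_ * u%:P)) !subrK.
Qed.

End PencilSyzygy.

Definition vnth (R : nmodType) n (v : 'cV[R]_n) (i : nat) : R :=
  if insub i is Some r then v r 0 else 0.

Lemma vnth_ord (R : nmodType) n (v : 'cV[R]_n) (i : 'I_n) : vnth v i = v i 0.
Proof. by rewrite /vnth valK. Qed.

Lemma vnth_out (R : nmodType) n (v : 'cV[R]_n) i : (n <= i)%N -> vnth v i = 0.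
Proof. by move=> ni; rewrite /vnth insubF // ltnNge ni. Qed.

Definition poly_of_col (R : nzRingType) n (v : 'cV[R]_n) : {poly R} :=
  \poly_(j < n) vnth v j.

Lemma coef_poly_of_col (R : nzRingType) n (v : 'cV[R]_n) i :
  (poly_of_col v)`_i = vnth v i.
Proof. by rewrite coef_poly; case: ltnP => // /vnth_out ->. Qed.

Lemma poly_of_colK (R : nzRingType) n (p : {poly R}) :
  (size p <= n)%N -> poly_of_col (\col_(j < n) p`_j) = p.
Proof.
move=> /leq_sizeP p0; apply/polyP => i; rewrite coef_poly_of_col.
case: (ltnP i n) => [lt_in | /[dup] /vnth_out -> /p0 -> //].
by rewrite (vnth_ord _ (Ordinal lt_in)) mxE.
Qed.

Lemma col_coef_eq0 (R : nzRingType) n (p : {poly R}) :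
  (size p <= n)%N -> \col_(m < n) p`_m = 0 -> p = 0.
Proof.
move=> /leq_sizeP p0 /matrixP pm; apply/polyP => i; rewrite coef0.
case: (ltnP i n) => [lt_in | /p0 //].
by have := pm (Ordinal lt_in) 0; rewrite !mxE.
Qed.

Lemma sum_pick (R : nmodType) n (F : nat -> R) i :
  (forall r, (n <= r)%N -> F r = 0) ->
  \sum_(r < n) (if r == i :> nat then F r else 0) = F i.
Proof. by move=> F0; rewrite -big_mkcond big_ord1_eq; case: ltnP => // /F0. Qed.

Lemma sum_pickS (R : nmodType) n (F : nat -> R) i :
  (forall r, (n <= r)%N -> F r = 0) ->
  \sum_(r < n) (if r.+1 == i then F r else 0) = if i is i'.+1 then F i' else 0.
Proof. by case: i => [|i] F0; [rewrite big1 | exact: sum_pick]. Qed.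

Lemma sum_pick_half (R : nmodType) k (F G : nat -> R) i :
  (forall j, (k <= j)%N -> F j = 0) -> (forall j, (k <= j)%N -> G j = 0) ->
  \sum_(r < 2 * k) (if (i == r %/ 2)%N then (if odd r then G else F) (r %/ 2)%N else 0) =
    F i + G i.
Proof.
move=> F0 G0; pose H r := (if odd r then G else F) (r %/ 2)%N.
have H0 r : (2 * k <= r)%N -> H r = 0.
  by move=> kr; rewrite /H; case: ifP => _; [apply: G0 | apply: F0]; lia.
transitivity (\sum_(r < 2 * k) ((if r == 2 * i :> nat then H r else 0) +
                                (if r == (2 * i).+1 :> nat then H r else 0))).
  by apply: eq_bigr => r _; do 3 case: eqP => ? //=; rewrite ?addr0 ?add0r //; lia.
rewrite big_split /= !sum_pick // /H.
have -> : odd (2 * i) = false by lia.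
have -> : odd (2 * i).+1 = true by lia.
have -> : (2 * i %/ 2 = i)%N by lia.
by have -> : ((2 * i).+1 %/ 2 = i)%N by lia.
Qed.

Definition interleave (R : nzRingType) k (P Q : {poly R}) : 'cV[R]_(2 * k) :=
  \col_(r < 2 * k) (if odd r then Q else P)`_(r %/ 2).

Lemma interleave_vnth (R : nzRingType) k (v : 'cV[R]_(2 * k)) :
  interleave k (\poly_(j < k) vnth v (2 * j)) (\poly_(j < k) vnth v (2 * j).+1) = v.
Proof.
apply/matrixP => r z; rewrite ord1 mxE -vnth_ord.
have r_lt : (r %/ 2 < k)%N by have := ltn_ord r; lia.
by case: ifP => r_odd; rewrite coef_poly r_lt; congr vnth; lia.
Qed.

Section PencilComplex.
Variables (R : comNzRingType) (a b c d : R).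

Local Notation s := (pencil a (- b)).
Local Notation t := (pencil d c).

(* [D0 k] and [D1 k] are, by conversion, [D0_gen pa pb pc pd k] and
   [D1_gen pa pb pc pd k]. *)
Definition D0_gen k : 'M[R]_(2 * k, k.+1) :=
  \matrix_(r < 2 * k, col < k.+1)
    let j := (r %/ 2)%N in
    if ~~ odd r then
      (if col == j :> nat then - d
       else if col == j.+1 :> nat then - c else 0)
    else
      (if col == j :> nat then a
       else if col == j.+1 :> nat then - b else 0).

Definition D1_gen k : 'M[R]_(k.-1, 2 * k) :=
  \matrix_(j < k.-1, col < 2 * k)
    if col == (2 * j)%N :> nat then - a
    else if col == (2 * j).+1 :> nat then - d
    else if col == (2 * j).+2 :> nat then b
    else if col == (2 * j).+3 :> nat then - c
    else 0.

Lemma D0_gen_mul_interleaveE k (P Q : {poly R}) (r : 'I_(2 * k)) (m : 'I_k.+1) :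
  D0_gen k r m * interleave k P Q r 0 =
    (if (m == r %/ 2 :> nat)%N then
       (if odd r then (fun i => a * Q`_i) else (fun i => - d * P`_i)) (r %/ 2)%N
     else 0) +
    (if (m == (r %/ 2).+1 :> nat)%N then
       (if odd r then (fun i => - b * Q`_i) else (fun i => - c * P`_i)) (r %/ 2)%N
     else 0).
Proof.
rewrite !mxE /=; case: odd; (case: eqP => [->|_];
  [by rewrite (ltn_eqF (ltnSn _)) addr0 | by case: eqP; rewrite ?mul0r ?add0r]).
Qed.

Lemma D1_gen_mulE k (j : 'I_k.-1) (r : 'I_(2 * k)) (y : R) :
  D1_gen k j r * y =
    (if (j == r %/ 2 :> nat)%N then (if odd r then - d else - a) * y else 0) +
    (if (j.+1 == r %/ 2)%N then (if odd r then - c else b) * y else 0).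
Proof.
rewrite mxE.
have -> : (r == 2 * j :> nat)%N = ~~ odd r && (j == r %/ 2 :> nat)%N by lia.
have -> : (r == (2 * j).+1 :> nat)%N = odd r && (j == r %/ 2 :> nat)%N by lia.
have -> : (r == (2 * j).+2 :> nat)%N = ~~ odd r && (j.+1 == r %/ 2)%N by lia.
have -> : (r == (2 * j).+3 :> nat)%N = odd r && (j.+1 == r %/ 2)%N by lia.
case: odd => /=; (case: eqP => [<-|_];
  [by rewrite (gtn_eqF (ltnSn _)) addr0 | by case: eqP; rewrite ?mul0r ?add0r]).
Qed.

Lemma mul_trD0_gen_interleave k (P Q : {poly R}) :
  (size P <= k)%N -> (size Q <= k)%N ->
  (D0_gen k)^T *m interleave k P Q = \col_(m < k.+1) (s * Q - t * P)`_m.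
Proof.
have vanish x (p : {poly R}) j : (size p <= k)%N -> (k <= j)%N -> x * p`_j = 0.
  by move=> /leq_sizeP p0 /p0 ->; rewrite mulr0.
move=> sP sQ; apply/matrixP => m z; rewrite ord1 !mxE.
under eq_bigr => r _ do rewrite mxE D0_gen_mul_interleaveE.
rewrite big_split /= sum_pick_half ?coefB ?coef_pencilM;
  try by move=> j /vanish ->.
case: (nat_of_ord m) => [|j] /=.
  by rewrite big1 //; ring.
by rewrite sum_pick_half; [ring | move=> i /vanish -> ..].
Qed.

Lemma mul_trD1_gen k (w : 'cV[R]_k.-1) :
  (D1_gen k)^T *m w = interleave k (- (s * poly_of_col w)) (- (t * poly_of_col w)).
Proof.
have vanish x j : (k.-1 <= j)%N -> x * vnth w j = 0 by move/vnth_out ->; rewrite mulr0.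
apply/matrixP => r z; rewrite ord1 !mxE.
under eq_bigr => j _ do rewrite mxE -vnth_ord D1_gen_mulE.
rewrite big_split /= (sum_pick (F := fun j => _ * vnth w j));
  rewrite ?(sum_pickS (F := fun j => _ * vnth w j)); try by move=> j /vanish.
case: odd; rewrite coefN coef_pencilM;
  by case: (r %/ 2)%N => [|i] /=; rewrite !coef_poly_of_col; ring.
Qed.

Hypothesis coprime_da : forall p q, d * p = a * q -> exists u, p = a * u /\ q = d * u.
Hypothesis lreg_cabd : GRing.lreg (c * a + b * d).

Theorem D_gen_exact k : (0 < k)%N ->
  forall v : 'cV[R]_(2 * k),
    (D0_gen k)^T *m v = 0 <-> exists w : 'cV[R]_(k.-1), v = (D1_gen k)^T *m w.
Proof.
move=> k_gt0 v; split => [v_ker | [w ->]]; last first.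
  have size_im x y : (size (- (pencil x y * poly_of_col w)) <= k)%N.
    by rewrite size_polyN (leq_trans (size_pencilM_leq x y (size_poly _ _))) ?prednK.
  rewrite mul_trD1_gen mul_trD0_gen_interleave //; apply/matrixP => m z.
  by rewrite !mxE !mulrN opprK mulrCA addNr coef0.
pose P := \poly_(j < k) vnth v (2 * j); pose Q := \poly_(j < k) vnth v (2 * j).+1.
have sP : (size P <= k.-1.+1)%N by rewrite prednK // size_poly.
have sQ : (size Q <= k.-1.+1)%N by rewrite prednK // size_poly.
have vPQ : interleave k P Q = v := interleave_vnth v.
rewrite -vPQ mul_trD0_gen_interleave ?size_poly // in v_ker.
have /eqP : s * Q - t * P = 0.
  apply: col_coef_eq0 v_ker; rewrite (leq_trans (size_polyD _ _)) // size_polyN.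
  by rewrite geq_max !size_pencilM_leq ?size_poly.
rewrite subr_eq0 eq_sym => /eqP e.
have [W sW [PW QW]] := pencil_syzygy coprime_da lreg_cabd sP sQ e.
exists (\col_(j < k.-1) (- W)`_j).
by rewrite mul_trD1_gen poly_of_colK ?size_polyN // !mulrN !opprK -PW -QW.
Qed.

End PencilComplex.

Section SubstitutionCongruence.
Variables (R : comNzRingType) (n : nat) (a : {mpoly R[n]}) (lq : n.-tuple {mpoly R[n]}).
Hypothesis X_congr : forall i : 'I_n, exists u, 'X_i = lq`_i + a * u.

Lemma comp_mpoly_congr p : exists u, p = p \mPo lq + a * u.
Proof.
pose C p := exists u, p = p \mPo lq + a * u.
have C_const x : C x%:MP by exists 0; rewrite comp_mpolyC mulr0 addr0.
have CD p1 p2 : C p1 -> C p2 -> C (p1 + p2).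
  move=> [u1 e1] [u2 e2]; exists (u1 + u2); rewrite comp_mpolyD.
  by move: (p1 \mPo lq) (p2 \mPo lq) e1 e2 => q1 q2 -> ->; rewrite addrACA -mulrDr.
have CM p1 p2 : C p1 -> C p2 -> C (p1 * p2).
  move=> [u1 e1] [u2 e2]; exists (u1 * p2 + (p1 \mPo lq) * u2); rewrite rmorphM /=.
  move: (p1 \mPo lq) (p2 \mPo lq) e1 e2 => q1 q2 -> ->.
  by rewrite mulrDl mulrDr (mulrCA q1) -mulrA -addrA -mulrDr (addrC (q1 * u2)).
have CX m : C 'X_[m].
  rewrite mpolyXE_id; apply: (big_ind C); [exact: (C_const 1) | exact: CM |].
  move=> i _; elim: (m i) => [|e IH]; first exact: (C_const 1).
  by rewrite exprS; apply: CM IH; have [u e1] := X_congr i; exists u; rewrite comp_mpolyXU.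
elim/mpolyind: p => [|x m p _ _ Cp]; first exact: (C_const 0).
by rewrite -mul_mpolyC; apply: CD Cp; apply: CM.
Qed.

End SubstitutionCongruence.

Lemma coprime_of_retraction (R : idomainType) (f : R -> R) (a d : R) :
  {morph f : x y / x * y} -> (forall p, exists u, p = f p + a * u) ->
  a != 0 -> f a = 0 -> f d != 0 ->
  forall p q, d * p = a * q -> exists u, p = a * u /\ q = d * u.
Proof.
move=> fM f_congr a_neq0 fa0 fd_neq0 p q e.
have /eqP : f d * f p = 0 by rewrite -fM e fM fa0 mul0r.
rewrite mulf_eq0 (negbTE fd_neq0) /= => /eqP fp0.
have [u pu] := f_congr p; rewrite fp0 add0r in pu.
by exists u; split => //; apply: (mulfI a_neq0); rewrite -e pu mulrCA.
Qed.

Definition inv_i : Rpoly := (('i : CC)^-1)%:MP.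

Lemma paE : pa = inv_i * 'X_0 - 'X_1.
Proof. by rewrite /pa /xi scalerBr scalerK ?neq0Ci // mul_mpolyC. Qed.

Lemma pcE : pc = inv_i * 'X_0 + 'X_1.
Proof. by rewrite /pc /xi scalerDr scalerK ?neq0Ci // mul_mpolyC. Qed.

Lemma pbE : pb = inv_i * 'X_2 - 'X_3.
Proof. by rewrite /pb /xi scalerBr scalerK ?neq0Ci // mul_mpolyC. Qed.

Lemma pdE : pd = inv_i * 'X_2 + 'X_3.
Proof. by rewrite /pd /xi scalerDr scalerK ?neq0Ci // mul_mpolyC. Qed.

Definition pa_subst : 4.-tuple Rpoly :=
  [tuple if i == 1 :> 'I_4 then inv_i * 'X_0 else 'X_i | i < 4].

Lemma comp_pa_substX i :
  'X_i \mPo pa_subst = if i == 1 :> 'I_4 then inv_i * 'X_0 else 'X_i.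
Proof. by rewrite comp_mpolyXU -tnth_nth tnth_mktuple. Qed.

Lemma pa_subst_congr i : exists u, 'X_i = pa_subst`_i + pa * u.
Proof.
rewrite -tnth_nth tnth_mktuple; case: eqP => [->|_]; last by exists 0; rewrite mulr0 addr0.
by exists (-1); rewrite paE mulrN1 opprB addrC subrK.
Qed.

Lemma comp_pa_subst_pa : pa \mPo pa_subst = 0.
Proof. by rewrite paE raddfB /= rmorphM /= comp_mpolyC !comp_pa_substX subrr. Qed.

Lemma comp_pa_subst_pd : pd \mPo pa_subst = pd.
Proof. by rewrite pdE raddfD /= rmorphM /= comp_mpolyC !comp_pa_substX. Qed.

Definition unit_pt (j : 'I_4) : 'I_4 -> CC := fun i => (i == j)%:R.

Lemma pa_neq0 : pa != 0.
Proof.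
apply/negP => /eqP pa0; have := congr1 (meval (unit_pt 0)) pa0.
rewrite paE mevalB mevalM mevalC !mevalXU /unit_pt /= meval0 mulr1 subr0.
by apply/eqP; rewrite invr_eq0 neq0Ci.
Qed.

Lemma pd_neq0 : pd != 0.
Proof.
apply/negP => /eqP pd0; have := congr1 (meval (unit_pt 3)) pd0.
rewrite pdE mevalD mevalM mevalC !mevalXU /unit_pt /= meval0 mulr0 add0r.
by apply/eqP; apply: oner_neq0.
Qed.

Lemma cabd_neq0 : pc * pa + pb * pd != 0.
Proof.
apply/negP => /eqP e; have := congr1 (meval (unit_pt 0)) e.
rewrite paE pbE pcE pdE !(mevalB, mevalD, mevalM) mevalC !mevalXU /unit_pt /= meval0.
rewrite !mulr1 !mulr0 !addr0 !subr0 mulr0 addr0.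
by apply/eqP; rewrite mulf_neq0 // invr_eq0 neq0Ci.
Qed.

Lemma coprime_pd_pa p q : pd * p = pa * q -> exists u, p = pa * u /\ q = pd * u.
Proof.
apply: (coprime_of_retraction (f := comp_mpoly pa_subst)).
- exact: rmorphM.
- exact: comp_mpoly_congr pa_subst_congr.
- exact: pa_neq0.
- exact: comp_pa_subst_pa.
- by rewrite comp_pa_subst_pd pd_neq0.
Qed.

Theorem proposition4p1 (k : nat) (hk : (2 <= k)%N) :
  forall v : 'cV[Rpoly]_(2 * k),
    (D0 k)^T *m v = 0 <-> exists w : 'cV[Rpoly]_(k.-1), v = (D1 k)^T *m w.
Proof.
exact: (D_gen_exact coprime_pd_pa (mulfI cabd_neq0) (ltnW hk)).
Qed.
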